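(* Let $G=(X,\Sigma,\delta,X_0)$ be an NFA with observable events $\Sigma_o$ and a nonempty set of secret states $X_S\subseteq X$, and let $K\in\mathbb N$. Then $G$ is $K$-SSO w.r.t. $\Sigma_o$ and $X_S$ if and only if $G$ is $\min\{K,\ |\hat X|\,2^{|X\setminus X_S|}-1\}$-SSO w.r.t. $\Sigma_o$ and $X_S$, where $\hat X$ is the set of states of $G$ reachable from $X_S$.
   Context: An NFA is $G=(X,\Sigma,\delta,X_0)$ with finite state set $X$, finite event set $\Sigma$, initial states $X_0\subseteq X$, and transition function $\delta:X\times\Sigma\to 2^X$ extended to strings in the usual way. $\Sigma=\Sigma_o\dot\cup\Sigma_{uo}$, and $P:\Sigma^*\to\Sigma_o^*$ is the natural projection erasing unobservable events. $X_{NS}=X\setminus X_S$. A run $x_0\xrightarrow{s_1}x_1\cdots\xrightarrow{s_n}x_n$ means $x_{k+1}\in\delta(x_k,s_{k+1})$, written $x_0\xrightarrow{s}x_n$; it is non-secret if all its states lie in $X_{NS}$. $\hat X$ is the set of states $x$ with $x\in\delta(x_s,w)$ for some $x_s\in X_S$, $w\in\Sigma^*$ (including $X_S$ itself). $K$-SSO: $G$ is strongly $K$-step opaque w.r.t. $\Sigma_o$ and $X_S$ if for every run $x_0\xrightarrow{s}x_s\xrightarrow{t}x_t$ with $x_0\in X_0$, $x_s\in X_S$, $|P(t)|\le K$, there exists a run $x_0'\xrightarrow{s'}x_s'\xrightarrow{t'}x_t'$ with $x_0'\in X_0$, $P(s')=P(s)$, $P(t')=P(t)$, and the subrun $x_s'\xrightarrow{t'}x_t'$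 non-secret. *)

From mathcomp Require Import all_boot.
Set Implicit Arguments. Unset Strict Implicit. Unset Printing Implicit Defensive.

(* An NFA G = (X, Sigma, delta, X0): X, Sigma finite types,
   delta : X -> Sigma -> {set X}, X0 : {set X}.
   Observable events Sigma_o : {set Sigma}; the rest are unobservable. *)

(* A run from x is encoded as the sequence of (event, state reached) pairs:
   x --a1--> y1 --a2--> y2 ... ; [::] is the empty run at x. *)
Fixpoint is_run (X Sigma : finType) (delta : X -> Sigma -> {set X})
    (x : X) (p : seq (Sigma * X)) : bool :=
  match p with
  | [::] => true
  | (a, y) :: p' => (y \in delta x a) && is_run delta y p'
  end.

Definition run_label (X Sigma : Type) (p : seq (Sigma * X)) : seq Sigma := map fst p.
Definition run_end (X Sigma : Type) (x : X) (p : seq (Sigma * X)) : X := last x (map snd p).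
Definition run_states (X Sigma : Type) (x : X) (p : seq (Sigma * X)) : seq X := x :: map snd p.

Definition proj (Sigma : finType) (So : {set Sigma}) (s : seq Sigma) : seq Sigma :=
  [seq a <- s | a \in So].

Definition K_SSO (X Sigma : finType) (delta : X -> Sigma -> {set X}) (X0 : {set X})
    (So : {set Sigma}) (XS : {set X}) (K : nat) : Prop :=
  forall (x0 : X) (p1 p2 : seq (Sigma * X)),
    x0 \in X0 -> is_run delta x0 p1 ->
    run_end x0 p1 \in XS ->
    is_run delta (run_end x0 p1) p2 ->
    size (proj So (run_label p2)) <= K ->
    exists (x0' : X) (q1 q2 : seq (Sigma * X)),
      [/\ x0' \in X0, is_run delta x0' q1, is_run delta (run_end x0' q1) q2,
          proj So (run_label q1) = proj So (run_label p1) &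
          (proj So (run_label q2) = proj So (run_label p2) /\
           all (fun x => x \notin XS) (run_states (run_end x0' q1) q2))].

Definition step_rel (X Sigma : finType) (delta : X -> Sigma -> {set X}) : rel X :=
  fun x y => [exists a : Sigma, y \in delta x a].

Definition Xhat (X Sigma : finType) (delta : X -> Sigma -> {set X}) (XS : {set X})
  : {set X} :=
  [set x | [exists xs in XS, connect (step_rel delta) xs x]].

From mathcomp Require Import all_boot boolp zify.
Set Implicit Arguments. Unset Strict Implicit. Unset Printing Implicit Defensive.

(* Fix the observation [u] of the run into the secret state [xs] and follow a
   run [p] from [xs]. After a prefix [p_k] of [p] record the pair made of the
   current state (in [Xhat]) and the set of states at which some initial run
   observed as [u], followed by a non-secret run observed as [obs p_k], can
   end (a set of non-secret states). Only [|Xhat| 2^|X \ XS|] such pairs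
   exist, so if [p] has more prefixes than that, two prefixes [p_i], [p_j],
   [i < j], give the same pair. Cutting the loop between them gives a shorter run from
   [xs] with the same end state, and a non-secret run matching its
   observation can be rerouted through the common state set to match the
   observation of [p]. *)

Lemma ord_collision (T : finType) (A : {set T}) n (f : 'I_n -> T) :
  (forall i, f i \in A) -> #|A| < n -> exists i j : 'I_n, i < j /\ f i = f j.
Proof.
move=> fA ltAn.
have /injectivePn [i [j neq_ij eq_f]] : ~~ injectiveb f.
  apply/injectiveP => /card_imset imsetE.
  have : #|f @: [set: 'I_n]| <= #|A|.
    by apply/subset_leq_card/subsetP => _ /imsetP [i _ ->].
  by rewrite imsetE cardsT card_ord leqNgt ltAn.
case: (ltngtP i j) => [lt_ij | lt_ji | /val_inj eq_ij]; last by rewrite eq_ij eqxx in neq_ij.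
- by exists i, j.
- by exists j, i.
Qed.

Section Runs.
Variables (X Sigma : finType) (delta : X -> Sigma -> {set X}).

Lemma is_run_cat x (p q : seq (Sigma * X)) :
  is_run delta x (p ++ q) = is_run delta x p && is_run delta (run_end x p) q.
Proof. by elim: p x => [|[a y] p IH] x //=; rewrite IH andbA. Qed.

Lemma run_end_cat x (p q : seq (Sigma * X)) :
  run_end x (p ++ q) = run_end (run_end x p) q.
Proof. by rewrite /run_end map_cat last_cat. Qed.

Lemma all_run_states_cat (P : pred X) x (p q : seq (Sigma * X)) :
  all P (run_states x (p ++ q)) =
  all P (run_states x p) && all P (run_states (run_end x p) q).
Proof.
elim: p x => [|[a y] p IH] x /=; first by rewrite andbT; case: (P x).
by move: (IH y); rewrite /run_states /run_end /= => ->; rewrite !andbA.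
Qed.

Lemma mem_run_end x (p : seq (Sigma * X)) : run_end x p \in run_states x p.
Proof. exact: mem_last. Qed.

Lemma connect_run_end x (p : seq (Sigma * X)) :
  is_run delta x p -> connect (step_rel delta) x (run_end x p).
Proof.
elim: p x => [|[a y] p IH] x //= /andP [y_next run_p].
by apply: connect_trans (connect1 _) (IH _ run_p); apply/existsP; exists a.
Qed.

Lemma Xhat_run_end (XS : {set X}) x (p : seq (Sigma * X)) :
  x \in Xhat delta XS -> is_run delta x p -> run_end x p \in Xhat delta XS.
Proof.
rewrite !inE => /exists_inP [xs xsXS xs_to_x] /connect_run_end x_to_end.
by apply/exists_inP; exists xs => //; apply: connect_trans x_to_end.
Qed.

Lemma sub_Xhat (XS : {set X}) : XS \subset Xhat delta XS.
Proof. by apply/subsetP => x xXS; rewrite inE; apply/exists_inP; exists x. Qed.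

End Runs.

Section Observation.
Variables (X Sigma : finType) (So : {set Sigma}).

Definition obs (p : seq (Sigma * X)) : seq Sigma := proj So (run_label p).

Lemma obs_cat p q : obs (p ++ q) = obs p ++ obs q.
Proof. by rewrite /obs /proj /run_label map_cat filter_cat. Qed.

Lemma size_obs p : size (obs p) <= size p.
Proof. by rewrite /obs /proj size_filter -(size_map fst) count_size. Qed.

Lemma obs_cons a y p :
  obs ((a, y) :: p) = if a \in So then a :: obs p else obs p.
Proof. by []. Qed.

Lemma obs_split p w v :
  obs p = w ++ v -> exists k, obs (take k p) = w /\ obs (drop k p) = v.
Proof.
elim: p w => [|[a y] p IH] w.
  by case: w => // obs_v; exists 0.
case: w => [|b w] obs_p; first by exists 0; rewrite take0 drop0.
move: obs_p; rewrite obs_cons; case: ifP => aSo.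
  case=> <- /IH [k [obs_w obs_v]].
  by exists k.+1; rewrite /= obs_cons aSo obs_w.
move=> /(IH (b :: w)) [k [obs_w obs_v]].
by exists k.+1; rewrite /= obs_cons aSo.
Qed.

End Observation.

Section Opacity.
Variables (X Sigma : finType) (delta : X -> Sigma -> {set X}) (X0 : {set X})
  (So : {set Sigma}) (XS : {set X}).

Local Notation obs := (obs So).

Definition ns_path (y : X) (w : seq Sigma) (z : X) : Prop :=
  exists q, [/\ is_run delta y q, obs q = w,
    all (fun x => x \notin XS) (run_states y q) & run_end y q = z].

Definition cover (u w : seq Sigma) (z : X) : Prop :=
  exists2 x0, x0 \in X0 &
    exists p, [/\ is_run delta x0 p, obs p = u & ns_path (run_end x0 p) w z].

Definition cover_set (u w : seq Sigma) : {set X} := [set z | `[< cover u w z >]].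

Lemma ns_path_cat y w v z :
  ns_path y (w ++ v) z <-> exists2 m, ns_path y w m & ns_path m v z.
Proof.
split=> [[q [run_q obs_q ns_q end_q]] | [m [q [run_q obs_q ns_q end_q]]]].
  have [k [obs_w obs_v]] := obs_split obs_q.
  move: run_q ns_q end_q; rewrite -(cat_take_drop k q).
  rewrite is_run_cat all_run_states_cat run_end_cat.
  move=> /andP [run_w run_v] /andP [ns_w ns_v] end_v.
  by exists (run_end y (take k q)); [exists (take k q) | exists (drop k q)].
move=> [r [run_r obs_r ns_r end_r]]; subst m.
exists (q ++ r); rewrite is_run_cat all_run_states_cat run_end_cat obs_cat.
by rewrite run_q run_r ns_q ns_r obs_q obs_r end_r.
Qed.

Lemma cover_cat u w v z :
  cover u (w ++ v) z <-> exists2 y, cover u w y & ns_path y v z.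
Proof.
split=> [[x0 x0X0 [p [run_p obs_p /ns_path_cat [y ns_w ns_v]]]] |
         [y [x0 x0X0 [p [run_p obs_p ns_w]]] ns_v]].
  by exists y => //; exists x0 => //; exists p.
by exists x0 => //; exists p; split=> //; apply/ns_path_cat; exists y.
Qed.

Lemma cover_set_nonsecret u w : cover_set u w \subset ~: XS.
Proof.
apply/subsetP => z; rewrite !inE => /asboolP [x0 _ [p [_ _ [q [_ _ ns_q <-]]]]].
by move/allP: ns_q; apply; apply: mem_run_end.
Qed.

Lemma cover_extend u w1 w2 v z :
  cover_set u w1 = cover_set u w2 ->
  cover u (w1 ++ v) z -> cover u (w2 ++ v) z.
Proof.
move=> eq_sets /cover_cat [y cover_y ns_v]; apply/cover_cat; exists y => //.
have : y \in cover_set u w1 by rewrite inE; apply/asboolP.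
by rewrite eq_sets inE => /asboolP.
Qed.

Lemma K_SSO_coverP K :
  K_SSO delta X0 So XS K <->
  forall x0 p1 p2, x0 \in X0 -> is_run delta x0 p1 -> run_end x0 p1 \in XS ->
    is_run delta (run_end x0 p1) p2 -> size (obs p2) <= K ->
    exists z, cover (obs p1) (obs p2) z.
Proof.
split=> SSO x0 p1 p2 x0X0 run1 xsXS run2 /(SSO _ _ _ x0X0 run1 xsXS run2).
  move=> [x0' [q1 [q2 [x0'X0 run_q1 run_q2 obs_q1 [obs_q2 ns_q2]]]]].
  by exists (run_end (run_end x0' q1) q2), x0' => //; exists q1; split=> //; exists q2.
move=> [z [x0' x0'X0 [q1 [run_q1 obs_q1 [q2 [run_q2 obs_q2 ns_q2 _]]]]]].
by exists x0', q1, q2.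
Qed.

Lemma K_SSO_mono K K' :
  K' <= K -> K_SSO delta X0 So XS K -> K_SSO delta X0 So XS K'.
Proof.
move=> leK'K SSO x0 p1 p2 x0X0 run1 xsXS run2 obs_le.
exact: SSO x0X0 run1 xsXS run2 (leq_trans obs_le leK'K).
Qed.

Section Pumping.
Variables (N : nat) (u : seq Sigma) (xs : X).
Hypotheses (xs_hat : xs \in Xhat delta XS)
  (card_le : #|Xhat delta XS| * 2 ^ #|~: XS| <= N.+1)
  (short_covered : forall p, is_run delta xs p -> size (obs p) <= N ->
     exists z, cover u (obs p) z).

Lemma prefix_collision p :
  is_run delta xs p -> N < size (obs p) ->
  exists k1 k2, [/\ k1 < k2 <= size p, run_end xs (take k1 p) = run_end xs (take k2 p)
    & cover_set u (obs (take k1 p)) = cover_set u (obs (take k2 p))].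
Proof.
move=> run_p lt_N_obs.
pose state (k : 'I_(size p).+1) :=
  (run_end xs (take k p), cover_set u (obs (take k p))).
have [k1 [k2 [lt12 [eq_end eq_set]]]] :
    exists k1 k2 : 'I_(size p).+1, k1 < k2 /\ state k1 = state k2.
  apply: (@ord_collision _ (setX (Xhat delta XS) (powerset (~: XS)))).
    move=> k; rewrite in_setX powersetE cover_set_nonsecret andbT.
    apply: Xhat_run_end xs_hat _.
    by move: run_p; rewrite -{1}(cat_take_drop k p) is_run_cat => /andP [].
  rewrite cardsX card_powerset (leq_ltn_trans card_le) // ltnS.
  exact: leq_trans lt_N_obs (size_obs _ _).
by exists k1, k2; rewrite lt12 -ltnS ltn_ord.
Qed.

Lemma cover_pump p : is_run delta xs p -> exists z, cover u (obs p) z.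
Proof.
have [n] := ubnP (size p); elim: n p => // n IH p /ltnSE le_p_n run_p.
have [obs_le | /(prefix_collision run_p)] := leqP (size (obs p)) N.
  exact: short_covered.
move=> [k1 [k2 [/andP [lt12 le_k2] eq_end eq_set]]].
have run_split k : is_run delta xs (take k p) /\
    is_run delta (run_end xs (take k p)) (drop k p).
  by apply/andP; rewrite -is_run_cat cat_take_drop.
have run_cut : is_run delta xs (take k1 p ++ drop k2 p).
  by rewrite is_run_cat (run_split k1).1 eq_end (run_split k2).2.
have shorter : size (take k1 p ++ drop k2 p) < n.
  rewrite size_cat size_drop size_takel; last exact: leq_trans (ltnW lt12) le_k2.
  lia.
have [z] := IH _ shorter run_cut; rewrite obs_cat => /(cover_extend eq_set).
by rewrite -obs_cat cat_take_drop; exists z.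
Qed.

End Pumping.

Lemma K_SSO_pump N K :
  #|Xhat delta XS| * 2 ^ #|~: XS| <= N.+1 ->
  K_SSO delta X0 So XS N -> K_SSO delta X0 So XS K.
Proof.
move=> card_le; rewrite !K_SSO_coverP => SSO x0 p1 p2 x0X0 run1 xsXS run2 _.
apply: (cover_pump _ card_le _ run2) => [|p]; last exact: SSO x0X0 run1 xsXS.
exact: subsetP (sub_Xhat _ _) _ xsXS.
Qed.

End Opacity.

Theorem corollary3p1 (X Sigma : finType) (delta : X -> Sigma -> {set X})
    (X0 : {set X}) (So : {set Sigma}) (XS : {set X}) (K : nat) :
  XS != set0 ->
  (K_SSO delta X0 So XS K <->
   K_SSO delta X0 So XS (minn K (#|Xhat delta XS| * 2 ^ #|~: XS| - 1))).
Proof.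
move=> _; set B := #|Xhat delta XS| * 2 ^ #|~: XS|.
rewrite /minn; case: ltnP => // le_B_K.
split; first exact: K_SSO_mono.
by apply: K_SSO_pump; rewrite subn1 leqSpred.
Qed.
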